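(* Let $n_0,\dots,n_g\ge1$ and let $K\subseteq\mathbb Z^{g+1}$ be the subgroup generated by $(1,1,\dots,1)$ and the vectors $n_0e_0-n_\alpha e_\alpha$ for $\alpha=1,\dots,g$ (where $e_\alpha$ is the $\alpha$-th standard basis vector, indices from $0$). Then there is a group isomorphism $\mathbb Z^{g+1}/K\cong\mathrm{Jac}(B_{n_0,\dots,n_g})$ sending the coset of $(a_0,\dots,a_g)$ to the class of $\sum_{\alpha=0}^g a_\alpha(v_{\alpha,1}-v_{0,0})$; in particular, when $0\le a_\alpha\le n_\alpha$ for all $\alpha$, the coset of $(a_0,\dots,a_g)$ corresponds to the class of $\sum_{\alpha=0}^g(v_{\alpha,a_\alpha}-v_{0,0})$.
   Context: A graph is a finite, connected, loopless multigraph (parallel edges allowed). A divisor is an element of the free abelian group on $V(G)$; linear equivalence is generated by chip-firing (firing $w$ subtracts $\mathrm{val}(w)$ chips from $w$ and adds to each other vertex the number of edges joining it to $w$). $\mathrm{Jac}(G)$ is the group of linear equivalence classes of degree-$0$ divisors. For positive integers $n_0,\dots,n_g$, the banana graph $B_{n_0,\dots,n_g}$ is obtained by joining two vertices by $g+1$ internally disjoint paths of lengths $n_0,\dots,n_g$; it has genus $g$. Its vertices are labelled $v_{\alpha,i}$ ($0\le\alpha\le g$, $0\le i\le n_\alpha$), with $v_{\alpha,i}$ the vertex at distance $i$ from $v_{0,0}$ along the $\alpha$-th path; $v_{\alpha,0}=v_{0,0}$ and $v_{\alpha,n_\alpha}=v_{0,n_0}$ for all $\alpha$, other labels unique. *)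

From HB Require Import structures.
From mathcomp Require Import all_boot all_order all_algebra.
Set Implicit Arguments. Unset Strict Implicit. Unset Printing Implicit Defensive.
Import Order.TTheory GRing.Theory Num.Theory.
Local Open Scope ring_scope.

(* A multigraph on a finite vertex type V is given by a symmetric edge
   multiplicity function m : V -> V -> nat (m u w = number of edges
   joining u and w).  Divisors are functions V -> int. *)
Section ChipFiring.
Variables (V : finType) (m : V -> V -> nat).

Definition valence (w : V) : nat := (\sum_(u : V) m w u)%N.

Definition fire (w : V) (u : V) : int :=
  if u == w then - (valence w)%:Z else (m u w)%:Z.

Definition deg (D : V -> int) : int := \sum_(u : V) D u.

(* D1 and D2 are linearly equivalent: D1 is obtained from D2 by a
   sequence of firings and reverse firings, i.e. D1 - D2 is an integer
   combination of firing vectors. *)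
Definition lin_equiv (D1 D2 : V -> int) : Prop :=
  exists c : V -> int, forall u, D1 u - D2 u = \sum_(w : V) c w * fire w u.

End ChipFiring.

Section Banana.
Variables (g : nat) (n : 'I_g.+1 -> nat).

Definition bmax : nat := (\max_(a < g.+1) n a)%N.

(* raw labels (alpha, i); the vertex v_{alpha,i} with 0 <= i <= n alpha
   has canonical label: (0,0) if i = 0, (0,n_0) if i = n_alpha, else (alpha,i). *)
Definition vlab (a : 'I_g.+1) (i : nat) : 'I_g.+1 * nat :=
  if i == 0%N then (ord0, 0%N)
  else if i == n a then (ord0, n ord0) else (a, i).

Definition bvalid (x : 'I_g.+1 * 'I_bmax.+1) : bool :=
  (x.2 <= n x.1)%N && ((x.1 == ord0) || (0 < x.2 < n x.1)%N).

Definition bvert : finType := {x : 'I_g.+1 * 'I_bmax.+1 | bvalid x}.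

Definition bkey (x : bvert) : 'I_g.+1 * nat := ((val x).1, nat_of_ord (val x).2).

(* number of edges joining x and y: the edges of path alpha join
   v_{alpha,i} and v_{alpha,i+1} for 0 <= i < n_alpha. *)
Definition bmult (x y : bvert) : nat :=
  (\sum_(a < g.+1) \sum_(i < n a)
     (((bkey x == vlab a i) && (bkey y == vlab a i.+1)) ||
      ((bkey y == vlab a i) && (bkey x == vlab a i.+1))))%N.

Definition pt (a : 'I_g.+1) (i : nat) (u : bvert) : int :=
  (bkey u == vlab a i)%:Z.

Definition phi (a : 'I_g.+1 -> int) (u : bvert) : int :=
  \sum_(b < g.+1) a b * (pt b 1 u - pt ord0 0 u).

Definition inK (a : 'I_g.+1 -> int) : Prop :=
  exists (t : int) (c : 'I_g.+1 -> int),
    forall b : 'I_g.+1,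
      a b = t + (if b == ord0
                 then \sum_(b' < g.+1 | b' != ord0) c b' * (n ord0)%:Z
                 else - (c b * (n b)%:Z)).

End Banana.

From HB Require Import structures.
From mathcomp Require Import all_boot all_order all_algebra.
From mathcomp Require Import ring zify.
Set Implicit Arguments. Unset Strict Implicit. Unset Printing Implicit Defensive.
Import Order.TTheory GRing.Theory Num.Theory.
Local Open Scope ring_scope.

(* Write [phi a] for the class of sum_b a_b (v_{b,1} - v_{0,0}).  Firing the root
   v_{0,0} shows that phi (1,...,1) is principal, and firing an interior vertex
   v_{b,j} shows that v_{b,j+1} - 2 v_{b,j} + v_{b,j-1} is principal; hence
   v_{b,i} - v_{0,0} is equivalent to i (v_{b,1} - v_{0,0}).  This is the last
   claim, it shows that every degree-0 divisor lies in the image of phi, and,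
   since v_{b,n_b} = v_{0,n_0}, that n_0 e_0 - n_b e_b lies in the kernel.
   Conversely, if phi a is the Laplacian of c, the second difference of c along
   the path b vanishes except at v_{b,1}, where it is a_b; so c is affine on each
   path, and comparing its values at the common endpoint v_{0,n_0}, together with
   the balance equation at v_{0,0}, writes a as an element of K. *)

Section PrincipalDivisors.
Variables (V : finType) (m : V -> V -> nat).

Definition principal (D : V -> int) : Prop :=
  exists c : V -> int, forall u, D u = \sum_(w : V) c w * fire m w u.

Lemma lin_equivE D1 D2 : lin_equiv m D1 D2 = principal (fun u => D1 u - D2 u).
Proof. by []. Qed.

Lemma principal_ext D D' : principal D -> (forall u, D u = D' u) -> principal D'.
Proof. by move=> [c hc] e; exists c => u; rewrite -e. Qed.

Lemma principal0 : principal (fun _ => 0).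
Proof. by exists (fun _ => 0) => u; rewrite big1 // => w _; rewrite mul0r. Qed.

Lemma principalD D1 D2 :
  principal D1 -> principal D2 -> principal (fun u => D1 u + D2 u).
Proof.
move=> [c1 h1] [c2 h2]; exists (fun w => c1 w + c2 w) => u.
by rewrite h1 h2 -big_split /=; apply: eq_bigr => w _; rewrite mulrDl.
Qed.

Lemma principalZ k D : principal D -> principal (fun u => k * D u).
Proof.
move=> [c h]; exists (fun w => k * c w) => u.
by rewrite h mulr_sumr; apply: eq_bigr => w _; rewrite mulrA.
Qed.

Lemma principalN D : principal D -> principal (fun u => - D u).
Proof. by move=> h; apply: principal_ext (principalZ (-1) h) _ => u; rewrite mulN1r. Qed.

Lemma principalB D1 D2 :
  principal D1 -> principal D2 -> principal (fun u => D1 u - D2 u).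
Proof. by move=> h1 h2; apply: principalD h1 (principalN h2). Qed.

Lemma principal_sum (I : Type) (r : seq I) (F : I -> V -> int) :
  (forall i, principal (F i)) -> principal (fun u => \sum_(i <- r) F i u).
Proof.
move=> hF; elim: r => [|i r IH].
  by apply: principal_ext principal0 _ => u; rewrite big_nil.
by apply: principal_ext (principalD (hF i) IH) _ => u; rewrite big_cons.
Qed.

Lemma principal_fire w : principal (fire m w).
Proof.
exists (fun w' => (w' == w)%:Z) => u.
rewrite (bigD1 w) //= eqxx mul1r big1 ?addr0 // => w' /negbTE ->.
by rewrite mul0r.
Qed.

Lemma sum_fire_loopless (c : V -> int) u : m u u = 0%N ->
  \sum_(w : V) c w * fire m w u =
  \sum_(w : V) c w * (m u w)%:Z - c u * (valence m u)%:Z.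
Proof.
move=> huu; rewrite (bigD1 u) //= [X in _ = X - _](bigD1 u) //= huu mulr0 add0r.
rewrite /fire eqxx addrC mulrN; congr (_ - _); apply: eq_bigr => w hw.
by rewrite eq_sym (negbTE hw).
Qed.

End PrincipalDivisors.

Section Banana.
Variables (g : nat) (n : 'I_g.+1 -> nat).
Hypothesis n_gt0 : forall a, (0 < n a)%N.

Local Notation V := (bvert n).
Local Notation m := (@bmult g n).

Lemma vlab_eq_root a k : (vlab n a k == (ord0, 0%N)) = (k == 0%N).
Proof.
rewrite /vlab; have [//|k_neq0] := eqVneq k 0%N.
have [_|_] := eqVneq k (n a).
  by rewrite xpair_eqE eqxx /=; have := n_gt0 ord0; case: (n ord0).
by rewrite xpair_eqE; case: k k_neq0 => //= k _; rewrite andbF.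
Qed.

Lemma vlab_interior b j : (0 < j < n b)%N -> vlab n b j = (b, j).
Proof. by move=> /andP [j_gt0 j_lt]; rewrite /vlab gtn_eqF // ltn_eqF. Qed.

Lemma vlab_eq_interior a k b j : (0 < j < n b)%N ->
  (vlab n a k == (b, j)) = (a == b) && (k == j).
Proof.
move=> /andP [j_gt0 j_lt]; rewrite /vlab.
have [->|k_neq0] := eqVneq k 0%N.
  by rewrite xpair_eqE; case: j j_gt0 j_lt => // j _ _; rewrite !andbF.
have [->|_] := eqVneq k (n a); last by rewrite xpair_eqE.
have ne c : (c == b) && (n c == j) = false.
  by apply/negbTE/nandP; have [->|] := eqVneq c b; [right; rewrite gtn_eqF | left].
by rewrite xpair_eqE !ne.
Qed.

Lemma vlab_end a : vlab n a (n a) = (ord0, n ord0).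
Proof. by rewrite /vlab eqxx; have := n_gt0 a; case: (n a). Qed.

Lemma vlab_succ_neq a i : (i < n a)%N -> vlab n a i != vlab n a i.+1.
Proof.
move=> i_lt; have [->|i_gt0] := posnP i.
  by rewrite eq_sym vlab_eq_root.
by rewrite vlab_interior ?i_gt0 // eq_sym vlab_eq_interior ?i_gt0 // eqxx gtn_eqF.
Qed.

Lemma bkey_inj : injective (@bkey g n).
Proof.
case=> [[x1 x2] hx] [[y1 y2] hy] [e1 e2] /=.
by apply: val_inj => /=; congr (_, _) => //; apply: ord_inj.
Qed.

Lemma bkey_eq (u v : V) : (bkey u == bkey v) = (u == v).
Proof. exact: (inj_eq bkey_inj). Qed.

Lemma bkey_vlab (x : V) : bkey x = vlab n (bkey x).1 (bkey x).2.
Proof.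
rewrite /bkey; case: (val x) (valP x) => b j /andP [_]; rewrite /vlab /=.
have [->|_] := eqVneq (nat_of_ord j) 0%N; first by rewrite ltnn orbF => /eqP ->.
have [->|//] := eqVneq (nat_of_ord j) (n b).
by rewrite ltnn andbF orbF => /eqP ->.
Qed.

Lemma bkey_le (x : V) : ((bkey x).2 <= n (bkey x).1)%N.
Proof. by case: x => [[b j] /= /andP []]. Qed.

Lemma vertex_vlab a k : (k <= n a)%N -> exists x : V, bkey x = vlab n a k.
Proof.
move=> k_le.
have hv : ((vlab n a k).2 <= n (vlab n a k).1)%N &&
          (((vlab n a k).1 == ord0) || (0 < (vlab n a k).2 < n (vlab n a k).1)%N).
  rewrite /vlab; have [_|k_neq0] //= := eqVneq k 0%N.
  have [_|k_neq] /= := eqVneq k (n a); first by rewrite leqnn.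
  by rewrite k_le /= lt0n k_neq0 ltn_neqAle k_neq k_le orbT.
have hlt : ((vlab n a k).2 < (bmax n).+1)%N.
  by rewrite ltnS (leq_trans _ (leq_bigmax (vlab n a k).1)) //; case/andP: hv.
move: hlt hv; case: (vlab n a k) => l1 l2 hlt hv.
by exists (exist _ (l1, Ordinal hlt) hv).
Qed.

Lemma pt_vertex a i (x u : V) : bkey x = vlab n a i -> pt a i u = (u == x)%:Z.
Proof. by move=> hx; rewrite /pt -hx bkey_eq. Qed.

Lemma pt_root a : @pt g n a 0 =1 pt ord0 0.
Proof. by []. Qed.

Lemma pt_end a : @pt g n a (n a) =1 pt ord0 (n ord0).
Proof. by move=> u; rewrite /pt !vlab_end. Qed.

Definition ptn a i (u : V) : nat := bkey u == vlab n a i.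

Lemma sum_ptn a i : (i <= n a)%N -> (\sum_(w : V) ptn a i w = 1)%N.
Proof.
move=> /vertex_vlab [x hx]; rewrite (bigD1 x) //= /ptn hx eqxx big1 ?addn0 //.
by move=> w; rewrite -hx bkey_eq => /negbTE ->.
Qed.

Lemma sum_ord_indicator N (k : nat) (f : nat -> nat) :
  (\sum_(i < N) (i == k :> nat) * f i = (k < N) * f k)%N.
Proof.
elim: N => [|N IH]; first by rewrite big_ord0.
rewrite big_ord_recr /= IH ltnS.
by case: (ltngtP k N) => [h|h|->]; rewrite ?eqxx /= ?mul0n ?mul1n ?addn0.
Qed.

Lemma bmultC (x y : V) : m x y = m y x.
Proof.
by apply: eq_bigr => a _; apply: eq_bigr => i _; rewrite orbC.
Qed.

Lemma bmult_loopless (x : V) : m x x = 0%N.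
Proof.
apply/eqP; rewrite sum_nat_eq0; apply/forallP => a; rewrite sum_nat_eq0.
apply/forallP => i; rewrite orbb eqb0; apply/andP => -[/eqP -> /eqP e].
by move/eqP: e; apply/negP/vlab_succ_neq.
Qed.

Lemma bmult_root (x w : V) : bkey x = (ord0, 0%N) ->
  m x w = (\sum_(a < g.+1) ptn a 1 w)%N.
Proof.
move=> hx; apply: eq_bigr => a _; rewrite hx.
transitivity (\sum_(i < n a) (i == 0%N :> nat) * ptn a 1 w)%N.
  apply: eq_bigr => i _; rewrite ![(ord0, 0%N) == _]eq_sym !vlab_eq_root /= andbF orbF.
  by case: (nat_of_ord i) => [|?]; rewrite ?mul1n ?mul0n.
by rewrite (sum_ord_indicator _ _ (fun _ => ptn a 1 w)) n_gt0 mul1n.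
Qed.

Lemma bmult_interior (x w : V) b j : (0 < j < n b)%N -> bkey x = (b, j) ->
  m x w = (ptn b j.+1 w + ptn b j.-1 w)%N.
Proof.
move=> hj hx; have /andP [j_gt0 j_lt] := hj.
transitivity (\sum_(a < g.+1) (a == b) *
   (\sum_(i < n a) ((i == j :> nat) * ptn a i.+1 w
                   + (i == j.-1 :> nat) * ptn a i w)))%N; last first.
  rewrite (bigD1 b) //= eqxx mul1n [X in (_ + X)%N]big1 ?addn0 => [|a /negbTE -> //].
  rewrite big_split /= (sum_ord_indicator _ _ (fun i => ptn b i.+1 w)).
  by rewrite (sum_ord_indicator _ _ (fun i => ptn b i w)) j_lt (leq_ltn_trans (leq_pred j) j_lt) !mul1n.
have ej i : (i.+1 == j) = (i == j.-1) by case: (j) j_gt0.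
apply: eq_bigr => a _; rewrite hx; have [->|nab] := eqVneq a b; last first.
  rewrite mul0n big1 // => i _.
  by rewrite ![(b, j) == _]eq_sym !vlab_eq_interior // (negbTE nab) /= andbF.
rewrite mul1n; apply: eq_bigr => i _.
rewrite ![(b, j) == _]eq_sym !vlab_eq_interior // eqxx /= ej /ptn.
have [->|_] /= := eqVneq (nat_of_ord i) j.
  have -> : (j == j.-1) = false by case: (j) j_gt0 => // k _; rewrite gtn_eqF.
  by rewrite andbF orbF mul1n mul0n addn0.
by rewrite mul0n add0n andbC mulnb.
Qed.

Lemma valence_root (x : V) : bkey x = (ord0, 0%N) -> valence m x = g.+1.
Proof.
move=> hx; rewrite /valence (eq_bigr _ (fun w _ => bmult_root w hx)) exchange_big /=.
by rewrite (eq_bigr (fun _ => 1%N)) ?sum_nat_const ?card_ord ?muln1 // => b _; apply: sum_ptn.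
Qed.

Lemma valence_interior (x : V) b j : (0 < j < n b)%N -> bkey x = (b, j) ->
  valence m x = 2.
Proof.
move=> hj hx; rewrite /valence (eq_bigr _ (fun w _ => bmult_interior w hj hx)) big_split /=.
by case/andP: hj => _ j_lt; rewrite !sum_ptn // (leq_trans (leq_pred j) (ltnW j_lt)).
Qed.

Lemma principal_fire_root :
  principal m (fun u => \sum_(b < g.+1) (pt b 1 u - pt ord0 0 u)).
Proof.
have [x hx] := @vertex_vlab ord0 0 (leq0n _).
apply: principal_ext (principal_fire _ x) _ => u; rewrite /fire.
have [->|hux] := eqVneq u x.
  rewrite (valence_root hx) (pt_vertex _ hx) eqxx.
  rewrite (eq_bigr (fun _ => -1)) ?sumr_const ?card_ord ?mulNrn ?natz //.
  by move=> b _; rewrite /pt hx [(ord0, 0%N) == _]eq_sym vlab_eq_root.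
rewrite bmultC (bmult_root u hx) (big_morph Posz PoszD (erefl 0%:Z)).
by apply: eq_bigr => b _; rewrite (pt_vertex _ hx) (negbTE hux) subr0.
Qed.

Lemma principal_second_difference b j : (0 < j < n b)%N ->
  principal m (fun u => (pt b j.+1 u - pt b j u) - (pt b j u - pt b j.-1 u)).
Proof.
move=> hj; have /andP [j_gt0 j_lt] := hj.
have [x hx] := @vertex_vlab b j (ltnW j_lt).
have hx' : bkey x = (b, j) by rewrite hx vlab_interior.
apply: principal_ext (principal_fire _ x) _ => u; rewrite /fire.
have [->|hux] := eqVneq u x.
  have pt_succ : pt b j.+1 x = 0 by rewrite /pt hx (negbTE (vlab_succ_neq j_lt)).
  have pt_pred : pt b j.-1 x = 0.
    rewrite /pt hx eq_sym; case: (j) j_gt0 j_lt => // k _ /= /ltnW k_lt.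
    by rewrite (negbTE (vlab_succ_neq k_lt)).
  by rewrite (valence_interior hj hx') (pt_vertex _ hx) eqxx pt_succ pt_pred.
rewrite bmultC (bmult_interior u hj hx') (pt_vertex _ hx) (negbTE hux) /pt PoszD.
by rewrite subr0 sub0r opprK addrC.
Qed.

Lemma principal_pt_multiple b i : (i <= n b)%N ->
  principal m (fun u => (pt b i u - pt ord0 0 u) - i%:Z * (pt b 1 u - pt ord0 0 u)).
Proof.
have step k : (k.+1 <= n b)%N ->
    principal m (fun u => (pt b k.+1 u - pt b k u) - (pt b 1 u - pt b 0 u)).
  elim: k => [|k IH] k_lt; first by apply: principal_ext (principal0 _) _ => u; rewrite subrr.
  apply: principal_ext (principalD (principal_second_difference (k_lt : (0 < k.+1 < n b)%N))
    (IH (ltnW k_lt))) _ => u /=.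
  by rewrite addrA subrK.
elim: i => [|i IH] i_le.
  by apply: principal_ext (principal0 _) _ => u; rewrite mul0r subr0 subrr.
apply: principal_ext (principalD (IH (ltnW i_le)) (step _ i_le)) _ => u /=.
rewrite pt_root; ring.
Qed.

Lemma phi_equiv_pts (a : 'I_g.+1 -> nat) : (forall b, (a b <= n b)%N) ->
  lin_equiv m (@phi g n (fun b => (a b)%:Z))
    (fun u => \sum_(b < g.+1) (pt b (a b) u - pt ord0 0 u)).
Proof.
move=> a_le; rewrite lin_equivE.
apply: principal_ext (principalN (principal_sum (index_enum 'I_g.+1)
  (fun b => principal_pt_multiple (a_le b)))) _ => u.
by rewrite /phi -sumrB -sumrN; apply: eq_bigr => b _; ring.
Qed.

Lemma principal_phi_K_generator b : principal m (fun u =>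
   (n ord0)%:Z * (pt ord0 1 u - pt ord0 0 u) - (n b)%:Z * (pt b 1 u - pt ord0 0 u)).
Proof.
apply: principal_ext (principalB (principal_pt_multiple (leqnn (n b)))
  (principal_pt_multiple (leqnn (n ord0)))) _ => u /=.
rewrite pt_end; ring.
Qed.

Lemma inK_principal_phi (a : 'I_g.+1 -> int) : inK n a -> principal m (@phi g n a).
Proof.
move=> [t [k ha]].
pose Y (b : 'I_g.+1) (u : V) := pt b 1 u - pt ord0 0 u.
apply: principal_ext (principalD (principalZ t principal_fire_root)
  (principal_sum (index_enum 'I_g.+1)
    (fun b => principalZ ((b != ord0)%:Z * k b) (principal_phi_K_generator b)))) _ => u /=.
apply/esym; rewrite /phi (eq_bigr (fun b => t * Y b u + (if b == ord0
    then \sum_(b' < g.+1 | b' != ord0) k b' * (n ord0)%:Z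
    else - (k b * (n b)%:Z)) * Y b u)); last by move=> b _; rewrite ha mulrDl.
rewrite big_split /= -mulr_sumr; congr (_ + _).
rewrite (bigD1 ord0) //= [in RHS](bigD1 ord0) //= !mul0r add0r.
rewrite mulr_suml -big_split /=; apply: eq_bigr => b hb.
by rewrite (negbTE hb) /Y /=; ring.
Qed.

(* The coordinate of D along b is the sum of the path indices of its vertices. *)
Lemma phi_surjective (D : V -> int) : deg D = 0 ->
  exists a : 'I_g.+1 -> int, lin_equiv m D (@phi g n a).
Proof.
move=> degD0.
pose a b := \sum_(w : V) D w * ((bkey w).1 == b)%:Z * ((bkey w).2)%:Z.
exists a; rewrite lin_equivE.
apply: principal_ext (principal_sum (index_enum V)
  (fun w => principalZ (D w) (principal_pt_multiple (bkey_le w)))) _ => u.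
pose Y (b : 'I_g.+1) (u : V) := pt b 1 u - pt ord0 0 u.
have e1 : \sum_(w : V) D w * pt (bkey w).1 (bkey w).2 u = D u.
  rewrite (bigD1 u) //= /pt -bkey_vlab eqxx mulr1 big1 ?addr0 // => w hw.
  by rewrite -bkey_vlab bkey_eq eq_sym (negbTE hw) mulr0.
have e2 : \sum_(w : V) D w * pt ord0 0 u = 0.
  by move: degD0; rewrite /deg -mulr_suml => ->; rewrite mul0r.
have e3 : \sum_(w : V) D w * ((bkey w).2)%:Z * Y (bkey w).1 u = @phi g n a u.
  rewrite /phi /a; under [RHS]eq_bigr do rewrite mulr_suml.
  rewrite exchange_big /=; apply: eq_bigr => w _.
  rewrite (bigD1 (bkey w).1) //= eqxx mulr1 big1 ?addr0 // => b hb.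
  by rewrite eq_sym (negbTE hb) /= mulr0 !mul0r.
rewrite (eq_bigr (fun w => D w * pt (bkey w).1 (bkey w).2 u - D w * pt ord0 0 u
    - D w * ((bkey w).2)%:Z * Y (bkey w).1 u)); last by move=> w _; rewrite /Y; ring.
by rewrite !sumrB e1 e2 e3 subr0.
Qed.

Section Kernel.
Variables (a : 'I_g.+1 -> int) (c : V -> int).
Hypothesis phi_lap : forall u, @phi g n a u = \sum_(w : V) c w * fire m w u.

Definition c_at b k := \sum_(w : V) c w * pt b k w.

Lemma c_at_vertex b k (x : V) : bkey x = vlab n b k -> c_at b k = c x.
Proof.
move=> hx; rewrite /c_at (eq_bigr (fun w => c w * (w == x)%:Z)).
  by rewrite (bigD1 x) //= eqxx mulr1 big1 ?addr0 // => w /negbTE ->; rewrite mulr0.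
by move=> w _; rewrite (pt_vertex _ hx).
Qed.

Lemma c_at_second_difference b j : (0 < j < n b)%N ->
  a b * (j == 1%N)%:Z = c_at b j.+1 + c_at b j.-1 - 2%:Z * c_at b j.
Proof.
move=> hj; have /andP [j_gt0 j_lt] := hj.
have [x hx] := @vertex_vlab b j (ltnW j_lt).
have hx' : bkey x = (b, j) by rewrite hx vlab_interior.
have := phi_lap x; rewrite sum_fire_loopless ?bmult_loopless // (valence_interior hj hx').
rewrite -(c_at_vertex hx).
rewrite (eq_bigr (fun w => c w * pt b j.+1 w + c w * pt b j.-1 w)); last first.
  by move=> w _; rewrite (bmult_interior w hj hx') PoszD mulrDr addrC.
rewrite big_split /= -/(c_at b j.+1) -/(c_at b j.-1) [2%:Z * _]mulrC => <-.
rewrite /phi (bigD1 b) //= big1 ?addr0.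
  rewrite /pt hx' ![(b, j) == _]eq_sym !vlab_eq_interior // eqxx /=.
  by case: (j) j_gt0 => // k _ /=; rewrite andbF subr0 eq_sym.
move=> b' hb'; rewrite /pt hx' ![(b, j) == _]eq_sym !vlab_eq_interior // (negbTE hb') /=.
by case: (j) j_gt0 => // k _ /=; rewrite andbF subr0 mulr0.
Qed.

Lemma c_at_root :
  - \sum_(b < g.+1) a b = \sum_(b < g.+1) c_at b 1 - c_at ord0 0 * (g.+1)%:Z.
Proof.
have [x hx] := @vertex_vlab ord0 0 (leq0n _).
have := phi_lap x; rewrite sum_fire_loopless ?bmult_loopless // (valence_root hx).
rewrite -(c_at_vertex hx).
rewrite (eq_bigr (fun w => \sum_(b < g.+1) c w * pt b 1 w)); last first.
  by move=> w _; rewrite (bmult_root w hx) (big_morph Posz PoszD (erefl 0%:Z)) mulr_sumr.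
rewrite exchange_big /= => <-.
rewrite /phi -sumrN; apply: eq_bigr => b _.
by rewrite /pt hx [(ord0, 0%N) == _]eq_sym vlab_eq_root /=; lia.
Qed.

Lemma c_at_affine b i : (i.+1 <= n b)%N ->
  c_at b i.+1 = c_at b 0 + (i.+1)%:Z * (c_at b 1 - c_at b 0) + i%:Z * a b.
Proof.
have step k : (k.+1 <= n b)%N ->
    c_at b k.+1 - c_at b k = (c_at b 1 - c_at b 0) + (k != 0%N)%:Z * a b.
  elim: k => [|k IH] k_lt; first by rewrite /= mul0r addr0.
  have := c_at_second_difference (k_lt : (0 < k.+1 < n b)%N).
  have := IH (ltnW k_lt) => /=; have [->|_] /= := eqVneq k 0%N; lia.
elim: i => [|i IH] i_lt; first by rewrite mul0r addr0 mul1r addrC subrK.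
have := step _ i_lt; rewrite (IH (ltnW i_lt)) /=; lia.
Qed.

Lemma phi_principal_inK : inK n a.
Proof.
(* [d b] is the initial slope of [c] along path [b], [De] its increment from
   v_{0,0} to the common endpoint v_{0,n_0}. *)
pose d b := c_at b 1 - c_at b 0.
pose De := c_at ord0 (n ord0) - c_at ord0 0.
have hDe b : De = (n b)%:Z * d b + ((n b).-1)%:Z * a b.
  have := @c_at_affine b (n b).-1; rewrite prednK // => /(_ (leqnn _)).
  have -> : c_at b (n b) = c_at ord0 (n ord0) by rewrite /c_at; under eq_bigr do rewrite pt_end.
  by rewrite /De /d => ->; have := n_gt0 b; case: (n b) => // k _ /=; ring.
have hsum : \sum_(b < g.+1) (d b + a b) = 0.
  rewrite big_split /= /d sumrB.
  have -> : \sum_(b < g.+1) c_at b 0 = c_at ord0 0 * (g.+1)%:Z.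
    by rewrite (eq_bigr (fun _ => c_at ord0 0)) // sumr_const card_ord -mulr_natr natz.
  by rewrite -c_at_root addrC subrr.
clearbody d De.
exists (- De), (fun b => - (d b + a b)) => b.
have [->|nb] := eqVneq b ord0; last first.
  by rewrite (hDe b); have := n_gt0 b; case: (n b) => // k _ /=; ring.
rewrite (hDe ord0) -mulr_suml sumrN.
have -> : \sum_(b' < g.+1 | b' != ord0) (d b' + a b') = - (d ord0 + a ord0).
  by move: hsum; rewrite (bigD1 ord0) //= addrC => /eqP; rewrite addr_eq0 => /eqP.
by have := n_gt0 ord0; case: (n ord0) => // k _ /=; ring.
Qed.

End Kernel.
End Banana.

Theorem mainTheorem13 (g : nat) (n : 'I_g.+1 -> nat)
  (hn : forall a, (0 < n a)%N) :
  [/\ forall a : 'I_g.+1 -> int,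
        @inK g n a <-> lin_equiv (@bmult g n) (@phi g n a) (fun _ => 0),
      forall D : @bvert g n -> int, deg D = 0 ->
        exists a : 'I_g.+1 -> int, lin_equiv (@bmult g n) D (@phi g n a)
    & forall a : 'I_g.+1 -> nat, (forall b, a b <= n b)%N ->
        lin_equiv (@bmult g n) (@phi g n (fun b => (a b)%:Z))
          (fun u => \sum_(b < g.+1) (@pt g n b (a b) u - @pt g n ord0 0 u))].
Proof.
split; [move=> a | exact: phi_surjective | exact: phi_equiv_pts].
rewrite lin_equivE; split=> [/(inK_principal_phi hn) pa | [c hc]].
  by apply: principal_ext pa _ => u; rewrite subr0.
by apply: (phi_principal_inK hn (c := c)) => u; rewrite -hc subr0.
Qed.
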